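(* Let $q$ be a power of a prime $p$, and let $G<GL(V)$ with $V=\mathbb{F}_q^{mn}$ be a (not necessarily irreducible) $p$-exceptional group which acts primitively as a permutation group on the $n$ summands of a decomposition $V=V_1\oplus\cdots\oplus V_n$, where $\dim_{\mathbb{F}_q}V_i=m\ge1$ and $n\ge2$. Let $H\le S_n$ be the permutation group induced on $\{V_1,\dots,V_n\}$. Then either $H$ has order coprime to $p$, or $H$ is $p$-concealed (equivalently, as $H$ is primitive, one of: $A_n\trianglelefteq H$ with $n=ap^s-1$, $s\ge1$, $1\le a\le p-1$, $(a,s)\ne(1,1)$ and $H\ne A_3$ if $(n,p)=(3,2)$; $(n,p)=(8,3)$ and $H\in\{AGL_3(2),A\Gamma L_1(8)\}$; $(n,p)=(5,2)$ and $H=D_{10}$) and the setwise stabiliser $G_{V_1}$ is transitive on $V_1\setminus\{0\}$.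
   Context: $G\le GL(V)$ is $p$-exceptional if $p$ divides $|G|$ and every orbit of $G$ on $V$ has size coprime to $p$. $H\le S_n$ is $p$-concealed if $p$ divides $|H|$ and every orbit of $H$ on the power set of $\{1,\dots,n\}$ has size coprime to $p$. *)

From HB Require Import structures.
From mathcomp Require Import all_boot all_order all_algebra all_fingroup all_solvable.
Set Implicit Arguments. Unset Strict Implicit. Unset Printing Implicit Defensive.
Import GRing.Theory.

Local Open Scope group_scope.

Definition GLorbit (F : finFieldType) (d : nat) (G : {set {'GL_d[F]}})
    (v : 'rV[F]_d.-1.+1) : {set 'rV[F]_d.-1.+1} :=
  [set (v *m GLval g)%R | g in G].

Definition p_exceptional (p : nat) (F : finFieldType) (d : nat)
    (G : {set {'GL_d[F]}}) : Prop :=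
  (p %| #|G|)%N /\ forall v : 'rV[F]_d.-1.+1, coprime p #|GLorbit G v|.

Definition p_concealed (p n : nat) (H : {set {perm 'I_n}}) : Prop :=
  (p %| #|H|)%N /\ forall A : {set 'I_n}, coprime p #|orbit 'P^* H A|.

Definition induced_perms (F : finFieldType) (d n : nat) (G : {set {'GL_d[F]}})
    (Vs : 'I_n -> 'M[F]_d.-1.+1) : {set {perm 'I_n}} :=
  [set s : {perm 'I_n} |
     [exists g in G, [forall i, ((Vs i *m GLval g)%R == Vs (s i))%MS]]].

From HB Require Import structures.
From mathcomp Require Import all_boot all_order all_algebra all_fingroup all_solvable.
Set Implicit Arguments. Unset Strict Implicit. Unset Printing Implicit Defensive.
Import GRing.Theory.
Local Open Scope ring_scope.
Local Open Scope group_scope.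

(* Let G <= GL(V) permute the summands of a direct sum V = (+)_i V_i, and let
   sigma : G -> Sym(I) be the induced permutation representation; nothing
   about the dimensions of the V_i is needed.  The proof rests on vectors of
   prescribed support, the support of w being the set of i such that w has a
   nonzero component in V_i.
   - Any g fixing w maps supp(w) onto itself, so for each A <= I the orbit of
     A under sigma(G) has length dividing that of any w with supp(w) = A.
     Hence p-exceptionality of G forces p-concealment of the induced group.
   - If the stabiliser of V_i maps no nonzero u \in V_i to some v \in V_i,
     let C be the orbit of i under a subgroup Q of G, and take w = u plus
     transports by Q of v into the other V_j, j \in C.  Comparing components
     shows that the stabiliser of w fixes i while preserving C, so #|C|
     divides the length of the orbit of w.  A Sylow argument in the
     transitive group sigma(G) of order divisible by p yields Q with #|C|
     divisible by p, contradicting p-exceptionality.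
   Primitivity of the induced group is only used through its transitivity. *)

Lemma pgroup_orbit_dvd (aT : finGroupType) (D : {group aT}) (rT : finType)
    (to : action D rT) (p : nat) (Q : {group aT}) x a :
  p.-group Q -> Q \subset D -> a \in Q -> to x a != x -> (p %| #|orbit to Q x|)%N.
Proof.
move=> pQ sQD Qa xa; have Da := subsetP sQD a Qa.
have p_orbit : p.-nat #|orbit to Q x|.
  by rewrite card_orbit_in // (pnat_dvd (dvdn_indexg _ _) pQ).
have orbit_gt1 : (1 < #|orbit to Q x|)%N.
  apply/card_gt1P; exists x, (to x a).
  by rewrite orbit_refl mem_orbit // eq_sym.
have [k Ek] := p_natP p_orbit; rewrite Ek in orbit_gt1 *.
by case: k {Ek} orbit_gt1 => [|k] //; rewrite expnS dvdn_mulr.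
Qed.

Section Summands.
Variables (F : finFieldType) (d : nat) (I : finType).
Local Notation V := 'rV[F]_d.-1.+1.
Variables (G : {group {'GL_d[F]}}) (Vs : I -> 'M[F]_d.-1.+1).
Hypothesis Vs_neq0 : forall i, Vs i != 0.
Hypothesis Vs_direct : mxdirect (\sum_i Vs i)%MS.
Hypothesis G_permutes :
  forall g i, g \in G -> exists j, (Vs i *m GLval g == Vs j)%MS.

Definition others (j : I) : 'M[F]_d.-1.+1 := (\sum_(k | k != j) Vs k)%MS.

Lemma summand_others_cap r j (x : 'M[F]_(r, d.-1.+1)) :
  (x <= Vs j)%MS -> (x <= others j)%MS -> x = 0.
Proof.
move=> xj xo; have /mxdirect_sumsP capP := Vs_direct.
have : (x <= Vs j :&: others j)%MS by rewrite sub_capmx xj xo.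
by rewrite /others capP // submx0 => /eqP.
Qed.

Lemma summand_component j (x y a b : V) :
  (x <= Vs j)%MS -> (y <= Vs j)%MS -> (a <= others j)%MS -> (b <= others j)%MS ->
  x + a = y + b -> x = y.
Proof.
move=> xj yj aj bj xy; apply/eqP; rewrite -subr_eq0; apply/eqP.
apply: (@summand_others_cap 1 j); first by rewrite addmx_sub ?eqmx_opp.
have -> : x - y = b - a by rewrite -[x](addrK a) xy addrAC [y + b]addrC addrK.
by rewrite addmx_sub ?eqmx_opp.
Qed.

Lemma summand_eqmx_inj j k : (Vs j == Vs k)%MS -> j = k.
Proof.
move=> /eqmxP Vjk; apply/eqP; apply: contraTT (Vs_neq0 j) => jk.
rewrite negbK; apply/eqP/(summand_others_cap (submx_refl (Vs j))).
by rewrite /others (sumsmx_sup k) 1?eq_sym // Vjk.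
Qed.

Lemma sum_in_others (s : I -> I) (A : {pred I}) (f : I -> V) k :
  injective s -> (forall l, l \in A -> (f l <= Vs (s l))%MS) ->
  ((\sum_(l in A | l != k) f l)%R <= others (s k))%MS.
Proof.
move=> s_inj fA; apply: summx_sub => l /andP[lA lk].
by apply: (sumsmx_sup (s l)); [rewrite (inj_eq s_inj) | exact: fA].
Qed.

(* The permutation sigma g of the summands induced by g \in G: it exists as
   g maps summands onto summands injectively. *)
Definition sigma (g : {'GL_d[F]}) : {perm I} :=
  odflt 1 [pick s : {perm I} | [forall i, (Vs i *m GLval g == Vs (s i))%MS]].

Lemma sigma_exists g : g \in G ->
  exists s : {perm I}, forall i, (Vs i *m GLval g == Vs (s i))%MS.
Proof.
move=> Gg; pose f i := odflt i [pick j | (Vs i *m GLval g == Vs j)%MS].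
have fP i : (Vs i *m GLval g == Vs (f i))%MS.
  rewrite /f; case: pickP => [j -> //| none].
  by have [j] := G_permutes i Gg; rewrite none.
have f_inj : injective f.
  move=> a b fab; apply: summand_eqmx_inj.
  have ab : (Vs a *m GLval g :=: Vs b *m GLval g)%MS.
    by apply: eqmx_trans (eqmxP (fP a)) _; rewrite fab; apply/eqmx_sym/eqmxP.
  by have := eqmxMr (invmx (GLval g)) ab; rewrite !mulmxK ?GL_unitmx // => /eqmxP.
by exists (perm f_inj) => i; rewrite permE.
Qed.

Lemma sigmaP g i : g \in G -> (Vs i *m GLval g == Vs (sigma g i))%MS.
Proof.
move=> Gg; rewrite /sigma; case: pickP => [s /forallP // | none].
by have [s sP] := sigma_exists Gg; have /forallP := none s.
Qed.

Lemma summand_mul g i : g \in G -> (Vs i *m GLval g <= Vs (sigma g i))%MS.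
Proof. by move/(sigmaP i)/andP=> []. Qed.

Lemma sigma_eq g i j : g \in G -> (Vs i *m GLval g == Vs j)%MS -> sigma g i = j.
Proof.
move=> Gg /eqmxP gij; apply: summand_eqmx_inj; apply/eqmxP.
by apply: eqmx_trans gij; apply/eqmx_sym/eqmxP/sigmaP.
Qed.

Lemma sigmaM : {in G &, {morph sigma : x y / x * y}}.
Proof.
move=> x y Gx Gy; apply/permP => i; rewrite permM.
apply: sigma_eq; first exact: groupM.
rewrite GL_ME -mulmxE mulmxA; apply/eqmxP.
by apply: eqmx_trans (eqmxMr _ (eqmxP (sigmaP i Gx))) _; apply/eqmxP/sigmaP.
Qed.

Canonical sigma_morphism := Morphism sigmaM.

Lemma sigma_is_action : is_action G (fun i g => sigma g i).
Proof.
split=> [g | i x y Gx Gy]; first exact: perm_inj.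
by rewrite /= sigmaM // permM.
Qed.

Definition toI := Action sigma_is_action.

Lemma mulmx_GL1 (v : V) : v *m GLval 1 = v.
Proof. exact: mulmx1. Qed.

Lemma mulmx_GLM (v : V) : act_morph (fun v (g : {'GL_d[F]}) => v *m GLval g) v.
Proof. by move=> x y; rewrite GL_ME -mulmxE mulmxA. Qed.

Definition toV := TotalAction mulmx_GL1 mulmx_GLM.

Lemma others_mul g k : g \in G -> (others k *m GLval g <= others (sigma g k))%MS.
Proof.
move=> Gg; rewrite /others sumsmxMr; apply/sumsmx_subP => j jk.
apply: submx_trans (summand_mul j Gg) _.
by apply: (sumsmx_sup (sigma g j)); rewrite // (inj_eq perm_inj).
Qed.

Lemma others_act g k (w : V) : g \in G ->
  (w *m GLval g <= others (sigma g k))%MS = (w <= others k)%MS.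
Proof.
move=> Gg; apply/idP/idP => [wg | wk]; last first.
  exact: submx_trans (submxMr _ wk) (others_mul k Gg).
have Gg' : g^-1 \in G by rewrite groupV.
have := submx_trans (submxMr (GLval g^-1) wg) (others_mul (sigma g k) Gg').
by rewrite -mulmxA GL_VxE mulmxV ?GL_unitmx // mulmx1 morphV // permK.
Qed.

(* w has support A: its component in V_k is nonzero exactly when k \in A. *)
Definition support_is (w : V) (A : {set I}) : Prop :=
  forall k, (w <= others k)%MS = (k \notin A).

Lemma support_uniq w A B : support_is w A -> support_is w B -> A = B.
Proof. by move=> wA wB; apply/setP => k; apply: negb_inj; rewrite -wA -wB. Qed.

Lemma support_act w A g : g \in G ->
  support_is w A -> support_is (w *m GLval g) (sigma g @: A).
Proof.
move=> Gg wA k; rewrite -[k](permKV (sigma g)) others_act // wA.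
by rewrite mem_imset //; exact: perm_inj.
Qed.

Lemma support_sum (A : {set I}) (f : I -> V) :
  (forall j, j \in A -> (f j <= Vs j)%MS /\ f j != 0) ->
  support_is (\sum_(j in A) f j) A.
Proof.
move=> fA k; have fVs j : j \in A -> (f j <= Vs j)%MS by case/fA.
have [kA | kA] := boolP (k \in A); last first.
  rewrite (eq_bigl (fun j => (j \in A) && (j != k))); last first.
    by move=> j; case: eqP => [-> | _]; rewrite ?(negbTE kA) ?andbT.
  by apply: (sum_in_others (s := id)).
rewrite (bigD1 k) //=; apply/negP => wk; have [fk fk0] := fA k kA.
have rest : ((\sum_(j in A | j != k) f j)%R <= others k)%MS.
  exact: (sum_in_others (s := id)).
case/negP: fk0; apply/eqP; apply: (@summand_others_cap 1 k _ fk).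
by rewrite -(addrK (\sum_(j in A | j != k) f j) (f k)) addmx_sub ?eqmx_opp.
Qed.

Lemma stab_support w A :
  support_is w A -> 'C_G[w | toV] \subset 'C_G[A | toI^*].
Proof.
move=> wA; apply/subsetP => g /setIP[Gg /astab1P /= wg].
have := support_act Gg wA; rewrite wg => /(support_uniq wA) fixA.
by rewrite !inE Gg /= sub1set inE /setact /= -fixA.
Qed.

Lemma support_exists A : exists w, support_is w A.
Proof.
exists (\sum_(j in A) nz_row (Vs j))%R; apply: support_sum => j _.
by rewrite nz_row_sub nz_row_eq0 Vs_neq0.
Qed.

Lemma orbit_set_dvd_orbit_vector w A : support_is w A ->
  (#|orbit toI^* G A| %| #|orbit toV G w|)%N.
Proof.
move=> wA; rewrite card_orbit_in ?subxx // card_orbit.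
exact: indexgS (stab_support wA).
Qed.

Lemma orbit_induced A : orbit 'P^* (sigma @* G) A = orbit toI^* G A.
Proof. by rewrite /orbit morphimEdom -imset_comp; apply: eq_imset. Qed.

Lemma induced_orbits_coprime p :
  (forall w, coprime p #|orbit toV G w|) ->
  forall A, coprime p #|orbit 'P^* (sigma @* G) A|.
Proof.
move=> p'G A; have [w wA] := support_exists A.
by rewrite orbit_induced (coprime_dvdr (orbit_set_dvd_orbit_vector wA)).
Qed.

(* We build a vector w whose G-orbit has length divisible by #|C|. *)
Section Witness.
Variables (Q : {group {'GL_d[F]}}) (i : I) (u v : V).
Hypotheses (sQG : Q \subset G) (ui : (u <= Vs i)%MS) (vi : (v <= Vs i)%MS).
Hypotheses (u0 : u != 0) (v0 : v != 0).
Hypothesis no_map :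
  forall g, g \in G -> (Vs i *m GLval g == Vs i)%MS -> u *m GLval g != v.

Let C := orbit toI Q i.

Let transporter j := odflt 1 [pick t in Q | sigma t i == j].

Lemma transporterP j : j \in C ->
  transporter j \in Q /\ sigma (transporter j) i = j.
Proof.
rewrite /transporter => /imsetP[t Qt ->]; case: pickP => [s /andP[Qs /eqP] //|].
by move/(_ t); rewrite Qt eqxx.
Qed.

Let f j := if j == i then u else v *m GLval (transporter j).
Let w := (\sum_(j in C) f j)%R.

Lemma component_in_summand j : j \in C -> (f j <= Vs j)%MS /\ f j != 0.
Proof.
rewrite /f; case: eqP => [-> | _ jC]; first by [].
have [Qt tij] := transporterP jC; have Gt := subsetP sQG _ Qt.
split; first by rewrite -{2}tij; exact: submx_trans (submxMr _ vi) (summand_mul i Gt).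
apply: contra v0 => /eqP vt0.
by rewrite -(mulmxK (GL_unitmx (transporter j)) v) vt0 mul0mx.
Qed.

Lemma witness_support : support_is w C.
Proof. exact: support_sum component_in_summand. Qed.

(* The setwise stabiliser D of C in G acts transitively on C, as Q <= D. *)
Let D := 'C_G[C | toI^*].

Lemma D_sub : D \subset G.
Proof. exact: subsetIl. Qed.

Lemma D_act j g : g \in D -> (sigma g j \in C) = (j \in C).
Proof. by rewrite /D astab1_set => /setIP[_ gN]; exact: (astabs_act j gN). Qed.

Lemma orbit_D : orbit toI D i = C.
Proof.
apply/eqP; rewrite eqEsubset acts_sub_orbit ?orbit_refl; last first.
  by rewrite -astab1_set subsetIr.
by apply: imsetS; rewrite subsetI sQG astab1_set acts_orbit.
Qed.

(* If g fixes w, comparing the components of w and w g in V_(sigma g i)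
   shows that g maps u to the component of w there. *)
Lemma fixer_component g : g \in 'C_G[w | toV] -> u *m GLval g = f (sigma g i).
Proof.
move=> wg; have gD := subsetP (stab_support witness_support) g wg.
have /setIP[Gg /astab1P /= wgw] := wg; set j := sigma g i.
have iC : i \in C by exact: orbit_refl.
have jC : j \in C by rewrite D_act.
have fC l : l \in C -> (f l <= Vs l)%MS by case/component_in_summand.
have fCg l : l \in C -> (f l *m GLval g <= Vs (sigma g l))%MS.
  by move=> lC; exact: submx_trans (submxMr _ (fC l lC)) (summand_mul l Gg).
apply: (summand_component (submx_trans (submxMr _ ui) (summand_mul i Gg)) (fC j jC)).
- exact: (@sum_in_others (sigma g) C (fun l => f l *m GLval g) i perm_inj fCg).
- exact: (@sum_in_others id C f j (@inj_id I) fC).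
transitivity (w *m GLval g); last by rewrite wgw /w (bigD1 j).
by rewrite /w mulmx_suml [in RHS](bigD1 i) //= {2}/f eqxx.
Qed.

(* Hence the stabiliser of w fixes i: otherwise g (transporter j)^-1, with
   j = sigma g i, would stabilise V_i and map u to v. *)
Lemma witness_stab : 'C_G[w | toV] \subset 'C_D[i | toI].
Proof.
apply/subsetP => g wg; have gD := subsetP (stab_support witness_support) g wg.
have /setIP[Gg _] := wg.
rewrite inE gD !inE Gg sub1set inE /=; apply: contraT => moved.
set j := sigma g i in moved; have jC : j \in C by rewrite D_act ?orbit_refl.
have [Qt tij] := transporterP jC; have Gt := subsetP sQG _ Qt.
have ugv : u *m GLval g = v *m GLval (transporter j).
  by rewrite fixer_component // /f (negbTE moved).
have Ggt : g * (transporter j)^-1 \in G by rewrite groupM ?groupV.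
have fixes_i : sigma (g * (transporter j)^-1) i = i.
  by rewrite sigmaM ?groupV // permM -/j morphV // -{2}tij permK.
have stab_i := sigmaP i Ggt; rewrite fixes_i in stab_i.
case/negP: (no_map Ggt stab_i); apply/eqP.
by rewrite GL_ME GL_VE -mulmxE mulmxA ugv -mulmxA mulmxV ?GL_unitmx ?mulmx1.
Qed.

(* The orbit of w has length #|G : G_w|, a multiple of #|D : D_i| = #|C|. *)
Lemma witness_orbit : exists w : V, (#|C| %| #|orbit toV G w|)%N.
Proof.
exists w; rewrite -orbit_D card_orbit_in ?D_sub // card_orbit /D.
apply: dvdn_trans (indexgS _ witness_stab) _.
apply: indexSg D_sub.
exact: subset_trans witness_stab (subsetIl _ _).
Qed.

End Witness.

Lemma p_subgroup_moving p i : prime p -> (p %| #|sigma @* G|)%N ->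
  [transitive sigma @* G, on [set: I] | 'P] ->
  exists Q : {group {'GL_d[F]}},
    [/\ Q \subset G, p.-group Q & exists2 x, x \in Q & sigma x i != i].
Proof.
move=> p_pr pH trH; have [P sylP] := Sylow_exists p G; have sPG := pHall_sub sylP.
have ntPH : sigma @* P != 1.
  apply: contraTneq pH => PH1.
  have /and3P[_ _] := morphim_pSylow sigma_morphism sPG sylP.
  by rewrite PH1 indexg1 p'natE.
have [_ /morphimP[x _ Px ->] x1] := trivgPn _ ntPH.
have [k xk] : exists k, sigma x k != k.
  by apply/existsP; apply: contraR x1 => /existsPn fix_x; apply/eqP/permP => k;
    rewrite perm1; apply/eqP/negbNE/fix_x.
have /imsetP[_ /morphimP[t _ Gt ->] kE] : k \in orbit 'P (sigma @* G) i.
  by rewrite (atransP trH) ?inE.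
rewrite kE /aperm in xk.
exists (P :^ t^-1)%G; split.
- by rewrite conj_subG ?groupV.
- by rewrite pgroupJ (pHall_pgroup sylP).
exists (x ^ t^-1); first by rewrite memJ_conjg.
rewrite morphJ ?groupV ?(subsetP sPG x Px) // conjgE !permM morphV // invgK.
by apply: contra xk => /eqP/(congr1 (sigma t)); rewrite permKV => ->.
Qed.

(* Second half of the theorem: the stabiliser of V_i is transitive on the
   nonzero vectors of V_i, as otherwise the witness above has an orbit of
   length divisible by p. *)
Lemma summand_stabiliser_transitive p i (u v : V) : prime p ->
  (forall w, coprime p #|orbit toV G w|) -> (p %| #|sigma @* G|)%N ->
  [transitive sigma @* G, on [set: I] | 'P] ->
  (u <= Vs i)%MS -> (v <= Vs i)%MS -> u != 0 -> v != 0 ->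
  exists2 g, g \in G & (Vs i *m GLval g == Vs i)%MS /\ u *m GLval g = v.
Proof.
move=> p_pr p'G pH trH ui vi u0 v0.
have [/exists_inP[g Gg /andP[gi /eqP ugv]] | none] :=
  boolP [exists g in G, (Vs i *m GLval g == Vs i)%MS && (u *m GLval g == v)].
  by exists g.
have no_map g : g \in G -> (Vs i *m GLval g == Vs i)%MS -> u *m GLval g != v.
  by move=> Gg gi; apply: contra none => ugv; apply/exists_inP; exists g; rewrite ?gi.
have [Q [sQG pQ [x Qx xi]]] := p_subgroup_moving i p_pr pH trH.
have [w C_dvd_w] := witness_orbit sQG ui vi u0 v0 no_map.
have p_dvd_C := pgroup_orbit_dvd (to := toI) pQ sQG Qx xi.
by have := p'G w; rewrite prime_coprime // (dvdn_trans p_dvd_C C_dvd_w).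
Qed.

End Summands.

Lemma induced_permsE (F : finFieldType) (d n : nat) (G : {group {'GL_d[F]}})
    (Vs : 'I_n -> 'M[F]_d.-1.+1) (Vs_neq0 : forall i, Vs i != 0)
    (Vs_direct : mxdirect (\sum_i Vs i)%MS)
    (G_permutes : forall g i, g \in G -> exists j, (Vs i *m GLval g == Vs j)%MS) :
  induced_perms G Vs = sigma_morphism Vs_neq0 Vs_direct G_permutes @* G.
Proof.
apply/setP => s; rewrite inE morphimEdom.
apply/exists_inP/imsetP => [[g Gg /forallP gs] | [g Gg ->]]; exists g => //.
  by apply/permP => i; rewrite /= (sigma_eq Vs_neq0 Vs_direct G_permutes Gg (gs i)).
by apply/forallP => i; exact: (sigmaP Vs_neq0 Vs_direct G_permutes i Gg).
Qed.

Theorem theorem3p1 (p : nat) (F : finFieldType) (m n : nat)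
    (G : {group {'GL_(m * n)[F]}}) (Vs : 'I_n -> 'M[F]_((m * n).-1.+1)) :
  prime p -> (p \in [pchar F])%R ->
  (1 <= m)%N -> (2 <= n)%N ->
  (* V = V_1 (+) ... (+) V_n, each V_i of dimension m *)
  (forall i, \rank (Vs i) = m) ->
  mxdirect (\sum_i Vs i)%MS ->
  ((\sum_i Vs i)%MS :=: (1%:M)%R)%MS ->
  (* G permutes the summands *)
  (forall g i, g \in G -> exists j, ((Vs i *m GLval g)%R == Vs j)%MS) ->
  p_exceptional p G ->
  (* the induced permutation group H is primitive on the n summands *)
  [primitive <<induced_perms G Vs>>, on [set: 'I_n] | 'P] ->
  coprime p #|<<induced_perms G Vs>>|
  \/ (p_concealed p <<induced_perms G Vs>> /\
      forall i : 'I_n,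
        forall u v : 'rV[F]_((m * n).-1.+1),
          (u <= Vs i)%MS -> (v <= Vs i)%MS -> (u != 0)%R -> (v != 0)%R ->
          exists2 g, g \in G & ((Vs i *m GLval g)%R == Vs i)%MS /\ (u *m GLval g)%R = v).
Proof.
move=> p_pr _ m_gt0 _ rkV dirV _ permV [_ p'G] prim.
have Vs_neq0 i : Vs i != 0 by rewrite -mxrank_eq0 rkV -lt0n.
have H_E : <<induced_perms G Vs>> = sigma_morphism Vs_neq0 dirV permV @* G.
  by rewrite (induced_permsE Vs_neq0 dirV permV) genGid.
rewrite H_E in prim *; have /andP[trH _] := prim.
have [p'H | pH] := boolP (coprime p #|sigma_morphism Vs_neq0 dirV permV @* G|).
  by left.
rewrite prime_coprime // negbK in pH; right; split; first split => //.
  exact: (induced_orbits_coprime Vs_neq0 dirV permV).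
move=> i u v; exact: (summand_stabiliser_transitive (Vs_neq0 := Vs_neq0)
  (Vs_direct := dirV) (G_permutes := permV) p_pr p'G pH trH).
Qed.
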